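(* (a) Every connected Haar graph $\mathrm{Bi}(G,\emptyset,\emptyset,S)$ admits a partite presentation with exactly two vertex classes. (b) Conversely, if $P=\langle X\mid U\mid I\mid\phi\mid\mathcal R\rangle$ is a partite presentation with $X=\{0,1\}$ and $U=\emptyset$ (so every generator lies in $I$ and $\phi(s)$ swaps $0$ and $1$ for every generator $s$), then $\mathrm{PCay}(P)$ is a Haar graph, i.e. is isomorphic to $\mathrm{Bi}(G,\emptyset,\emptyset,T)$ for some group $G$ and $T\subseteq G$.
   Context: $\mathrm{Bi}(G,R,L,S)$, for $R=R^{-1},L=L^{-1},S\subseteq G$, has vertex set $\{(g)_0,(g)_1: g\in G\}$ and edges $\{(g)_0,(gr)_0\}$ ($r\in R$), $\{(g)_1,(gl)_1\}$ ($l\in L$), $\{(g)_0,(gs)_1\}$ ($s\in S$). A Haar graph is one of the form $\mathrm{Bi}(G,\emptyset,\emptyset,S)$. A partite presentation $P=\langle X\mid U\mid I\mid \phi\mid \mathcal R\rangle$ consists of: a nonempty set $X$; disjoint sets $U$, $I$ with $S':=U\cup I$; the group $MF_P:=\langle S'\mid s^2\ (s\in I)\rangle$; a map $\phi:S'\to\mathrm{Sym}(X)$ such that $\phi(s)$ is a fixed-point-free involution for each $s\in I$ and the $\phi(s)$ generate a subgroup acting transitively on $X$; and for each $x\in X$ a set $\mathcal R_x\subseteq MF_P$ of words $s_1\cdots s_n$ with $\phi(s_n)\circ\cdots\circ\phi(s_1)(x)=x$. The presentation graph $C(P)$ has vertex set $X$; for each $s\in U$ and $x\in X$ one edge from $x$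 to $\phi(s)(x)$ labelled $s$ in that direction and $s^{-1}$ in reverse; for each $s\in I$ and each pair $\{x,\phi(s)(x)\}$ one edge with both orientations labelled $s$. The presentation complex $\mathcal C(P)$ is $C(P)$ with, for every $x\in X$ and $r=s_1\cdots s_n\in\mathcal R_x$, a 2-cell attached along the closed walk from $x$ successively traversing the outgoing edges labelled $s_1,\dots,s_n$. $\mathrm{PCay}(P)$ is the 1-skeleton of the universal cover of $\mathcal C(P)$. *)

From Stdlib Require Import List Relations.
Import ListNotations.
Set Implicit Arguments.

Record Group := {
  gcar :> Type;
  gmul : gcar -> gcar -> gcar;
  gone : gcar;
  ginv : gcar -> gcar;
  gmulA : forall x y z, gmul x (gmul y z) = gmul (gmul x y) z;
  gmul1l : forall x, gmul gone x = x;
  gmul1r : forall x, gmul x gone = x;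
  gmulVl : forall x, gmul (ginv x) x = gone;
  gmulVr : forall x, gmul x (ginv x) = gone }.

Definition graph_iso (V1 V2 : Type) (adj1 : V1 -> V1 -> Prop)
  (adj2 : V2 -> V2 -> Prop) : Prop :=
  exists (f : V1 -> V2) (g : V2 -> V1),
    (forall x, g (f x) = x) /\ (forall y, f (g y) = y) /\
    (forall x y, adj1 x y <-> adj2 (f x) (f y)).

(* ---------- Haar graphs Bi(G, {}, {}, S) ----------
   vertex (g, false) = (g)_0, vertex (g, true) = (g)_1;
   edges {(g)_0, (gs)_1} for s in S. *)
Definition haar_adj (G : Group) (S : G -> Prop) (p q : G * bool) : Prop :=
  exists s, S s /\
    ((snd p = false /\ snd q = true /\ fst q = gmul G (fst p) s) \/
     (snd p = true /\ snd q = false /\ fst p = gmul G (fst q) s)).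

Definition haar_connected (G : Group) (S : G -> Prop) : Prop :=
  forall p q : G * bool, clos_refl_trans _ (@haar_adj G S) p q.

(* Letters of MF_P = < U + I | s^2 (s in I) >: u^{+1}, u^{-1} for u in U,
   and s for s in I (which is its own inverse). *)
Inductive letter (U I : Type) : Type :=
  | LU : U -> bool -> letter U I   (* true: u, false: u^{-1} *)
  | LI : I -> letter U I.

Definition linv (U I : Type) (a : letter U I) : letter U I :=
  match a with
  | LU _ u b => LU I u (negb b)
  | LI _ i => LI U i
  end.

Definition act1 (X U I : Type) (fU fUi : U -> X -> X) (fI : I -> X -> X)
  (a : letter U I) (x : X) : X :=
  match a with
  | LU _ u true => fU u x
  | LU _ u false => fUi u x
  | LI _ i => fI i x
  end.

Fixpoint actw (X U I : Type) (fU fUi : U -> X -> X) (fI : I -> X -> X)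
  (w : list (letter U I)) (x : X) : X :=
  match w with
  | [] => x
  | a :: w' => actw fU fUi fI w' (act1 fU fUi fI a x)
  end.

Record PartitePres (X : Type) := {
  pU : Type;
  pI : Type;
  phiU : pU -> X -> X;
  phiUi : pU -> X -> X;
  phiU_K : forall u x, phiUi u (phiU u x) = x;
  phiU_Ki : forall u x, phiU u (phiUi u x) = x;
  phiI : pI -> X -> X;
  phiI_invol : forall i x, phiI i (phiI i x) = x;
  phiI_fpf : forall i x, phiI i x <> x;
  X_nonempty : inhabited X;
  phi_transitive : forall x y : X, exists w, actw phiU phiUi phiI w x = y;
  rels : X -> list (letter pU pI) -> Prop;
  rels_closed : forall x r, rels x r -> actw phiU phiUi phiI r x = x }.

Arguments pU {X}.
Arguments pI {X}.
Arguments rels {X}.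

Definition pletter (X : Type) (P : PartitePres X) := letter (pU P) (pI P).

Definition pact (X : Type) (P : PartitePres X) (w : list (pletter P)) (x : X)
  : X := actw (phiU P) (phiUi P) (phiI P) w x.

(* Combinatorial homotopy of walks in the presentation complex starting at
   the base vertex x0: walks from x0 in C(P) correspond bijectively to words
   of letters; homotopy rel endpoints is generated by inserting backtracks
   a a^{-1} and boundaries of 2-cells (a relator r in R_y inserted at a point
   where the walk is at y). *)
Inductive htpy (X : Type) (P : PartitePres X) (x0 : X) :
    list (pletter P) -> list (pletter P) -> Prop :=
  | htpy_refl w : @htpy X P x0 w w
  | htpy_sym w v : @htpy X P x0 w v -> @htpy X P x0 v w
  | htpy_trans w v t : @htpy X P x0 w v -> @htpy X P x0 v t -> @htpy X P x0 w t
  | htpy_back w1 w2 (a : pletter P) :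
      @htpy X P x0 (w1 ++ w2) (w1 ++ a :: linv a :: w2)
  | htpy_rel w1 w2 r :
      rels P (@pact X P w1 x0) r -> @htpy X P x0 (w1 ++ w2) (w1 ++ r ++ w2).

(* Vertices of the universal cover of the presentation complex:
   homotopy classes of walks from x0. *)
Definition PCayV (X : Type) (P : PartitePres X) (x0 : X) : Type :=
  { A : list (pletter P) -> Prop |
    exists w, forall v, A v <-> @htpy X P x0 w v }.

(* Adjacency in the 1-skeleton PCay(P) of the universal cover: lifts of the
   edges of C(P). *)
Definition pcay_adj (X : Type) (P : PartitePres X) (x0 : X)
  (A B : PCayV P x0) : Prop :=
  exists w (a : pletter P), proj1_sig A w /\ proj1_sig B (w ++ [a]).

(** The proof rests on a recognition criterion for [PCay(P)]
    ([pcay_iso_criterion]): its vertices are homotopy classes of words read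
    from the base vertex, so a labelling [f] of words by the vertices of a
    graph [Γ] yields [PCay(P) ≅ Γ] as soon as (i) two words are homotopic iff
    they get the same label, (ii) every vertex is a label, and (iii) the
    neighbours of [f w] are exactly the labels [f (w ++ [a])].

    (a) For a connected Haar graph [Bi(G, ∅, ∅, S)] we take [X = {0,1}], one
    involutory generator per [s ∈ S] swapping the two sides, and as relators
    at [x] all words that are closed walks from every vertex [(g)_x]; the
    label of a word is the endpoint of the corresponding walk from [(1)_x0].

    (b) For a presentation on [X = {0,1}] with [U = ∅] we build the
    fundamental group of the presentation complex (closed words modulo
    homotopy, a quotient group) and fix a generator [a0].  A word [w] is
    labelled by the class of [w] (closed up by [a0] if it ends on the other
    side) together with its side; this exhibits [PCay(P)] as the Haar graph
    of the fundamental group w.r.t. the classes of the words [i a0]. *)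

From Stdlib Require Import List Relations Bool ClassicalEpsilon
  FunctionalExtensionality PropExtensionality ProofIrrelevance.
Import ListNotations.
Set Implicit Arguments.

(** The classes of a relation [R]; [PCayV P x0] is literally
    [eqclass (htpy x0)]. *)
Definition eqclass (A : Type) (R : A -> A -> Prop) : Type :=
  { C : A -> Prop | exists a, forall b, C b <-> R a b }.

Section EquivalenceClasses.
Variables (A : Type) (R : A -> A -> Prop).
Hypothesis R_equiv : equivalence A R.

Definition class_of (a : A) : eqclass R :=
  exist _ (R a) (ex_intro _ a (fun b => iff_refl (R a b))).

Definition repr (C : eqclass R) : A :=
  proj1_sig (constructive_indefinite_description _ (proj2_sig C)).

Lemma eqclass_ext (C D : eqclass R) :
  (forall a, proj1_sig C a <-> proj1_sig D a) -> C = D.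
Proof.
  destruct C as [c Hc], D as [d Hd]; simpl; intros Hcd.
  assert (c = d) as <-.
  { apply functional_extensionality; intros a.
    apply propositional_extensionality, Hcd. }
  f_equal; apply proof_irrelevance.
Qed.

Lemma class_of_repr (C : eqclass R) : class_of (repr C) = C.
Proof.
  apply eqclass_ext; intros a; unfold repr.
  destruct (constructive_indefinite_description _ _) as [c Hc]; simpl.
  symmetry; apply Hc.
Qed.

Lemma class_of_surjective (C : eqclass R) : exists a, C = class_of a.
Proof. exists (repr C); symmetry; apply class_of_repr. Qed.

Lemma class_of_eq (a b : A) : class_of a = class_of b <-> R a b.
Proof.
  destruct R_equiv as [R_refl R_trans R_sym]; split.
  - intros Eab.
    assert (Hb : proj1_sig (class_of b) b) by apply R_refl.
    rewrite <- Eab in Hb; exact Hb.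
  - intros Hab; apply eqclass_ext; intros c; simpl; split; intros Hc.
    + apply R_trans with a; [apply R_sym, Hab | exact Hc].
    + apply R_trans with b; assumption.
Qed.

Lemma repr_class_of (a : A) : R (repr (class_of a)) a.
Proof. apply class_of_eq, class_of_repr. Qed.

End EquivalenceClasses.

Arguments class_of {A} R a.

Lemma ginv_unique (G : Group) (g h : G) : gmul G g h = gone G -> ginv G g = h.
Proof.
  intros Hgh.
  rewrite <- (gmul1r G (ginv G g)), <- Hgh, gmulA, gmulVl, gmul1l.
  reflexivity.
Qed.

Section QuotientGroup.
Variables (M : Type) (R : M -> M -> Prop).
Hypothesis R_equiv : equivalence M R.
Variables (op : M -> M -> M) (e : M) (inv : M -> M).
Hypothesis op_compat :
  forall a a' b b', R a a' -> R b b' -> R (op a b) (op a' b').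
Hypothesis op_assoc : forall a b c, R (op a (op b c)) (op (op a b) c).
Hypothesis op_unit_l : forall a, R (op e a) a.
Hypothesis op_unit_r : forall a, R (op a e) a.
Hypothesis op_inv_l : forall a, R (op (inv a) a) e.
Hypothesis op_inv_r : forall a, R (op a (inv a)) e.

Definition qmul (C D : eqclass R) : eqclass R := class_of R (op (repr C) (repr D)).
Definition qinv (C : eqclass R) : eqclass R := class_of R (inv (repr C)).

Lemma qmul_class (a b : M) :
  qmul (class_of R a) (class_of R b) = class_of R (op a b).
Proof.
  apply class_of_eq; [exact R_equiv|].
  apply op_compat; apply repr_class_of; exact R_equiv.
Qed.

Lemma qmul_assoc (C D E : eqclass R) : qmul C (qmul D E) = qmul (qmul C D) E.
Proof.
  destruct (class_of_surjective C) as [a ->],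
    (class_of_surjective D) as [b ->], (class_of_surjective E) as [c ->].
  rewrite !qmul_class; apply class_of_eq; auto.
Qed.

Lemma qmul_unit_l (C : eqclass R) : qmul (class_of R e) C = C.
Proof.
  destruct (class_of_surjective C) as [a ->].
  rewrite qmul_class; apply class_of_eq; auto.
Qed.

Lemma qmul_unit_r (C : eqclass R) : qmul C (class_of R e) = C.
Proof.
  destruct (class_of_surjective C) as [a ->].
  rewrite qmul_class; apply class_of_eq; auto.
Qed.

Lemma qinv_mul_l (C : eqclass R) : qmul (qinv C) C = class_of R e.
Proof.
  transitivity (qmul (qinv C) (class_of R (repr C))).
  - rewrite class_of_repr; reflexivity.
  - unfold qinv; rewrite qmul_class; apply class_of_eq; auto.
Qed.

Lemma qinv_mul_r (C : eqclass R) : qmul C (qinv C) = class_of R e.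
Proof.
  transitivity (qmul (class_of R (repr C)) (qinv C)).
  - rewrite class_of_repr; reflexivity.
  - unfold qinv; rewrite qmul_class; apply class_of_eq; auto.
Qed.

Definition quotient_group : Group :=
  {| gcar := eqclass R; gmul := qmul; gone := class_of R e; ginv := qinv;
     gmulA := qmul_assoc; gmul1l := qmul_unit_l; gmul1r := qmul_unit_r;
     gmulVl := qinv_mul_l; gmulVr := qinv_mul_r |}.

Lemma quotient_mul (a b : M) :
  gmul quotient_group (class_of R a) (class_of R b) = class_of R (op a b).
Proof. exact (qmul_class a b). Qed.

Lemma quotient_inv (a : M) :
  ginv quotient_group (class_of R a) = class_of R (inv a).
Proof.
  apply ginv_unique; simpl; rewrite qmul_class.
  apply class_of_eq; auto.
Qed.

End QuotientGroup.

Lemma haar_adj_side0 (G : Group) (S : G -> Prop) (g : G) (q : G * bool) :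
  @haar_adj G S (g, false) q <-> exists s, S s /\ q = (gmul G g s, true).
Proof.
  split.
  - intros [s [Hs [[_ [Hq2 Hq1]] | [Hf _]]]]; [|discriminate].
    exists s; split; [exact Hs|].
    destruct q as [h c]; simpl in *; subst; reflexivity.
  - intros [s [Hs ->]]; exists s; split; [exact Hs|].
    left; simpl; auto.
Qed.

Lemma haar_adj_side1 (G : Group) (S : G -> Prop) (g : G) (q : G * bool) :
  @haar_adj G S (g, true) q <-> exists s, S s /\ q = (gmul G g (ginv G s), false).
Proof.
  split.
  - intros [s [Hs [[Hf _] | [_ [Hq2 Hq1]]]]]; [discriminate|].
    exists s; split; [exact Hs|].
    destruct q as [h c]; simpl in *; subst.
    rewrite <- gmulA, gmulVr, gmul1r; reflexivity.
  - intros [s [Hs ->]]; exists s; split; [exact Hs|].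
    right; simpl; repeat split.
    rewrite <- gmulA, gmulVl, gmul1r; reflexivity.
Qed.

(** * Words and their homotopy in a presentation complex *)

Definition revinv (U I : Type) (w : list (letter U I)) : list (letter U I) :=
  rev (map (@linv U I) w).

Lemma linv_involutive (U I : Type) (a : letter U I) : linv (linv a) = a.
Proof. destruct a as [u b|i]; simpl; [rewrite negb_involutive|]; reflexivity. Qed.

Lemma revinv_involutive (U I : Type) (w : list (letter U I)) :
  revinv (revinv w) = w.
Proof.
  unfold revinv; rewrite map_rev, rev_involutive, map_map.
  rewrite <- (map_id w) at 2; apply map_ext, linv_involutive.
Qed.

Section Homotopy.
Variables (X : Type) (P : PartitePres X) (x0 : X).
Notation word := (list (pletter P)).
Notation HT := (@htpy X P x0).

Lemma pact_app (w v : word) (x : X) : pact (w ++ v) x = pact v (pact w x).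
Proof. unfold pact; revert x; induction w; simpl; auto. Qed.

Lemma pact_linv (a : pletter P) (x : X) : pact [linv a] (pact [a] x) = x.
Proof.
  destruct a as [u [|]|i]; simpl.
  - apply phiU_K.
  - apply phiU_Ki.
  - apply phiI_invol.
Qed.

Lemma pact_revinv (w : word) (x : X) : pact (revinv w) (pact w x) = x.
Proof.
  revert x; induction w as [|a w IH]; intros x; [reflexivity|].
  change (revinv (a :: w)) with (revinv w ++ [linv a]).
  change (a :: w) with ([a] ++ w).
  rewrite !pact_app, IH; apply pact_linv.
Qed.

Lemma htpy_equiv : equivalence word HT.
Proof.
  split.
  - intros w; apply htpy_refl.
  - intros w v t; apply htpy_trans.
  - intros w v; apply htpy_sym.
Qed.

Lemma htpy_endpoint (w v : word) : HT w v -> pact w x0 = pact v x0.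
Proof.
  induction 1 as [|? ? _ IH|? ? ? _ IH1 _ IH2|w1 w2 a|w1 w2 r Hr]; auto.
  - congruence.
  - change (w1 ++ a :: linv a :: w2) with (w1 ++ [a] ++ [linv a] ++ w2).
    rewrite !pact_app, pact_linv; reflexivity.
  - apply rels_closed in Hr.
    change (pact r (pact w1 x0) = pact w1 x0) in Hr.
    rewrite !pact_app, Hr; reflexivity.
Qed.

Lemma htpy_app_r (w v u : word) : HT w v -> HT (w ++ u) (v ++ u).
Proof.
  induction 1 as [w|? ? _ IH|? ? ? _ IH1 _ IH2|w1 w2 a|w1 w2 r Hr].
  - apply htpy_refl.
  - apply htpy_sym, IH.
  - eapply htpy_trans; eassumption.
  - rewrite <- !app_assoc; apply htpy_back.
  - rewrite <- !app_assoc; apply htpy_rel, Hr.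
Qed.

(** Prefixing by a closed word preserves homotopy (relators are attached at
    vertices, so the prefix must return to the base vertex). *)
Lemma htpy_app_l (p w v : word) : pact p x0 = x0 -> HT w v -> HT (p ++ w) (p ++ v).
Proof.
  intros Hp.
  induction 1 as [w|? ? _ IH|? ? ? _ IH1 _ IH2|w1 w2 a|w1 w2 r Hr].
  - apply htpy_refl.
  - apply htpy_sym, IH.
  - eapply htpy_trans; eassumption.
  - rewrite !app_assoc; apply htpy_back.
  - rewrite (app_assoc p w1 w2), (app_assoc p w1 (r ++ w2)).
    apply htpy_rel; rewrite pact_app, Hp; exact Hr.
Qed.

Lemma htpy_cancel (p w v : word) : HT (p ++ w ++ revinv w ++ v) (p ++ v).
Proof.
  revert p v; induction w as [|a w IH]; intros p v; [apply htpy_refl|].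
  change (revinv (a :: w)) with (revinv w ++ [linv a]).
  replace (p ++ (a :: w) ++ (revinv w ++ [linv a]) ++ v)
    with ((p ++ [a]) ++ w ++ revinv w ++ (linv a :: v))
    by (rewrite <- !app_assoc; reflexivity).
  eapply htpy_trans; [apply IH|].
  rewrite <- app_assoc; apply htpy_sym, htpy_back.
Qed.

Lemma htpy_back_end (w : word) (a : pletter P) : HT w (w ++ [a; linv a]).
Proof.
  pose proof (htpy_back x0 w [] a) as Hb.
  rewrite app_nil_r in Hb; exact Hb.
Qed.

Lemma htpy_cancel_last (w v : word) (a : pletter P) :
  HT (w ++ [a]) (v ++ [a]) -> HT w v.
Proof.
  intros Hwv; apply (htpy_app_r [linv a]) in Hwv.
  rewrite <- !app_assoc in Hwv.
  eapply htpy_trans; [apply htpy_back_end|].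
  eapply htpy_trans; [exact Hwv|].
  apply htpy_sym, htpy_back_end.
Qed.

End Homotopy.

(** * Recognising [PCay(P)] *)

Lemma pcay_iso_criterion (X : Type) (P : PartitePres X) (x0 : X) (V : Type)
    (adj : V -> V -> Prop) (f : list (pletter P) -> V) :
  (forall w v, htpy x0 w v <-> f w = f v) ->
  (forall p, exists w, f w = p) ->
  (forall w q, adj (f w) q <-> exists a, q = f (w ++ [a])) ->
  graph_iso (@pcay_adj X P x0) adj.
Proof.
  intros f_faithful f_onto f_adj.
  pose (F := fun C : PCayV P x0 => f (repr C)).
  pose (Gv := fun p => class_of (htpy x0)
                (proj1_sig (constructive_indefinite_description _ (f_onto p)))).
  assert (F_class : forall w, F (class_of (htpy x0) w) = f w).
  { intros w; apply f_faithful, repr_class_of, htpy_equiv. }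
  exists F, Gv; split; [|split].
  - intros C; destruct (class_of_surjective C) as [w ->].
    unfold Gv; destruct (constructive_indefinite_description _ _) as [v Hv].
    simpl; apply class_of_eq; [apply htpy_equiv|].
    apply f_faithful; rewrite Hv; apply F_class.
  - intros p; unfold Gv.
    destruct (constructive_indefinite_description _ _) as [v Hv].
    simpl; rewrite F_class; exact Hv.
  - intros C D.
    destruct (class_of_surjective C) as [c ->],
      (class_of_surjective D) as [d ->].
    rewrite !F_class, f_adj; unfold pcay_adj; simpl; split.
    + intros [w [a [Hcw Hdw]]]; exists a.
      apply f_faithful; eapply htpy_trans; [exact Hdw|].
      apply htpy_sym, htpy_app_r, Hcw.
    + intros [a Ha]; exists c, a; split; [apply htpy_refl|].
      apply f_faithful, Ha.
Qed.

(** * Part (a): the presentation of a connected Haar graph *)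

Section HaarPresentation.
Variables (G : Group) (S : G -> Prop).
Notation hletter := (letter Empty_set {s | S s}).

Definition haar_step (a : hletter) (p : G * bool) : G * bool :=
  match a with
  | LU _ e _ => match e with end
  | LI _ s => if snd p then (gmul G (fst p) (ginv G (proj1_sig s)), false)
              else (gmul G (fst p) (proj1_sig s), true)
  end.

Definition haar_walk (w : list hletter) (p : G * bool) : G * bool :=
  fold_left (fun q a => haar_step a q) w p.

Lemma haar_walk_app (w v : list hletter) (p : G * bool) :
  haar_walk (w ++ v) p = haar_walk v (haar_walk w p).
Proof. apply fold_left_app. Qed.

Lemma haar_adj_step (p q : G * bool) :
  @haar_adj G S p q <-> exists a, q = haar_step a p.
Proof.
  assert (Hletter : forall Q : hletter -> Prop,
             (exists a, Q a) <-> exists s (Hs : S s), Q (LI _ (exist _ s Hs))).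
  { intros Q; split; [intros [[[] b|[s Hs]] Ha]|intros [s [Hs Ha]]]; eauto. }
  rewrite Hletter; destruct p as [g []];
    [rewrite haar_adj_side1 | rewrite haar_adj_side0];
    split; intros [s [Hs Hq]]; exists s; first [exists Hs | split]; assumption.
Qed.

Lemma haar_reachable (p q : G * bool) :
  clos_refl_trans _ (@haar_adj G S) p q -> exists w, haar_walk w p = q.
Proof.
  induction 1 as [p q Hpq| |p q r _ [w1 H1] _ [w2 H2]].
  - apply haar_adj_step in Hpq; destruct Hpq as [a ->]; exists [a]; reflexivity.
  - exists []; reflexivity.
  - exists (w1 ++ w2); rewrite haar_walk_app; congruence.
Qed.

Lemma haar_step_linv (a : hletter) (p : G * bool) : haar_step (linv a) (haar_step a p) = p.
Proof.
  destruct a as [[]|s]; destruct p as [g []]; simpl;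
    rewrite <- gmulA; [rewrite gmulVl | rewrite gmulVr]; rewrite gmul1r; reflexivity.
Qed.

Lemma haar_walk_revinv (w : list hletter) (p : G * bool) :
  haar_walk (revinv w) (haar_walk w p) = p.
Proof.
  revert p; induction w as [|a w IH]; intros p; [reflexivity|].
  change (revinv (a :: w)) with (revinv w ++ [linv a]).
  rewrite haar_walk_app; simpl; rewrite IH; apply haar_step_linv.
Qed.

Lemma haar_walk_translate (w : list hletter) (g h : G) (b : bool) :
  haar_walk w (gmul G g h, b) =
  (gmul G g (fst (haar_walk w (h, b))), snd (haar_walk w (h, b))).
Proof.
  revert h b; induction w as [|[[]|s] w IH]; intros h b; [reflexivity|].
  destruct b; simpl; rewrite <- gmulA; apply IH.
Qed.

Definition no_perm (e : Empty_set) (x : bool) : bool := match e with end.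
Definition swap_sides (s : {s | S s}) (x : bool) : bool := negb x.

Lemma haar_walk_side (w : list hletter) (p : G * bool) :
  snd (haar_walk w p) = actw no_perm no_perm swap_sides w (snd p).
Proof.
  revert p; induction w as [|[[]|s] w IH]; intros [g b]; [reflexivity|].
  simpl; rewrite IH; destruct b; reflexivity.
Qed.

Definition haar_relators (x : bool) (r : list hletter) : Prop :=
  forall g, haar_walk r (g, x) = (g, x).

Lemma haar_relators_closed (x : bool) (r : list hletter) :
  haar_relators x r -> actw no_perm no_perm swap_sides r x = x.
Proof.
  intros Hr.
  change (actw no_perm no_perm swap_sides r (snd (gone G, x)) = snd (gone G, x)).
  rewrite <- haar_walk_side, Hr; reflexivity.
Qed.

(** By equivariance, a walk closed at one vertex [(h)_x] is a relator at [x]. *)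
Lemma haar_closed_walk_relator (x : bool) (h : G) (r : list hletter) :
  haar_walk r (h, x) = (h, x) -> haar_relators x r.
Proof.
  intros Hr g.
  replace g with (gmul G (gmul G g (ginv G h)) h)
    by (rewrite <- gmulA, gmulVl, gmul1r; reflexivity).
  rewrite haar_walk_translate, Hr; reflexivity.
Qed.

Variables (s0 : G) (S_s0 : S s0).

Lemma haar_transitive (x y : bool) :
  exists w, actw no_perm no_perm swap_sides w x = y.
Proof.
  destruct (bool_dec x y) as [<-|Hxy]; [exists []; reflexivity|].
  exists [LI Empty_set (exist _ s0 S_s0)]; simpl.
  destruct x, y; simpl; congruence.
Qed.

Definition haar_presentation : PartitePres bool :=
  {| pU := Empty_set; pI := {s | S s};
     phiU := no_perm; phiUi := no_perm;
     phiU_K := fun e _ => match e with end;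
     phiU_Ki := fun e _ => match e with end;
     phiI := swap_sides;
     phiI_invol := fun _ => negb_involutive;
     phiI_fpf := fun _ => no_fixpoint_negb;
     X_nonempty := inhabits true;
     phi_transitive := haar_transitive;
     rels := haar_relators;
     rels_closed := haar_relators_closed |}.

Lemma haar_htpy_iff (x0 : bool) (w v : list hletter) :
  @htpy bool haar_presentation x0 w v <->
  haar_walk w (gone G, x0) = haar_walk v (gone G, x0).
Proof.
  split.
  - induction 1 as [| |? ? ? _ IH1 _ IH2|w1 w2 a|w1 w2 r Hr]; try congruence.
    + rewrite !haar_walk_app; simpl; rewrite haar_step_linv; reflexivity.
    + rewrite !haar_walk_app.
      change (pact w1 x0) with (actw no_perm no_perm swap_sides w1 (snd (gone G, x0))) in Hr.
      rewrite <- haar_walk_side in Hr.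
      destruct (haar_walk w1 (gone G, x0)) as [g b]; rewrite Hr; reflexivity.
  - intros Hwv.
    eapply htpy_trans; [|apply (@htpy_cancel bool haar_presentation x0 [] w v)]; simpl.
    pose proof (htpy_rel x0 w [] (revinv w ++ v) (P := haar_presentation)) as Hrel.
    rewrite !app_nil_r in Hrel; apply Hrel.
    change (haar_relators (actw no_perm no_perm swap_sides w (snd (gone G, x0)))
              (revinv w ++ v)).
    rewrite <- haar_walk_side.
    destruct (haar_walk w (gone G, x0)) as [h y] eqn:Hw; simpl.
    apply haar_closed_walk_relator with (h := h).
    rewrite haar_walk_app, <- Hw at 1; rewrite haar_walk_revinv.
    symmetry; exact Hwv.
Qed.

Theorem haar_pcay_iso (x0 : bool) :
  @haar_connected G S -> graph_iso (@pcay_adj bool haar_presentation x0) (@haar_adj G S).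
Proof.
  intros S_connected.
  apply (@pcay_iso_criterion bool haar_presentation x0 _ _
           (fun w => haar_walk w (gone G, x0))).
  - apply haar_htpy_iff.
  - intros p; apply haar_reachable, S_connected.
  - intros w q; rewrite haar_adj_step; split; intros [a Ha]; exists a;
      rewrite Ha, haar_walk_app; reflexivity.
Qed.

End HaarPresentation.

Lemma haar_connected_generator (G : Group) (S : G -> Prop) :
  @haar_connected G S -> exists s, S s.
Proof.
  intros S_connected.
  destruct (haar_reachable (S_connected (gone G, false) (gone G, true)))
    as [[|[[]|[s Hs]] w] Hw]; [discriminate Hw | exists s; exact Hs].
Qed.

(** * The fundamental group of a presentation complex *)

Section FundamentalGroup.
Variables (X : Type) (P : PartitePres X) (x0 : X).
Notation word := (list (pletter P)).

Definition loop : Type := { w : word | pact w x0 = x0 }.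

Definition loop_htpy (l m : loop) : Prop := htpy x0 (proj1_sig l) (proj1_sig m).

Lemma loop_cat_closed (w v : word) :
  pact w x0 = x0 -> pact v x0 = x0 -> pact (w ++ v) x0 = x0.
Proof. intros Hw Hv; rewrite pact_app, Hw; exact Hv. Qed.

Lemma loop_rev_closed (w : word) : pact w x0 = x0 -> pact (revinv w) x0 = x0.
Proof.
  intros Hw; transitivity (pact (revinv w) (pact w x0)).
  - rewrite Hw; reflexivity.
  - apply pact_revinv.
Qed.

Definition loop_cat (l m : loop) : loop :=
  exist _ (proj1_sig l ++ proj1_sig m)
    (loop_cat_closed _ _ (proj2_sig l) (proj2_sig m)).
Definition loop_nil : loop := exist _ [] eq_refl.
Definition loop_rev (l : loop) : loop :=
  exist _ (revinv (proj1_sig l)) (loop_rev_closed _ (proj2_sig l)).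

Lemma loop_htpy_equiv : equivalence loop loop_htpy.
Proof.
  destruct (htpy_equiv P x0) as [H_refl H_trans H_sym].
  split; intros l; [apply H_refl | intros m n; apply H_trans | intros m; apply H_sym].
Qed.

Lemma loop_cat_compat (l l' m m' : loop) :
  loop_htpy l l' -> loop_htpy m m' -> loop_htpy (loop_cat l m) (loop_cat l' m').
Proof.
  unfold loop_htpy; simpl; intros Hl Hm.
  eapply htpy_trans; [apply htpy_app_l; [apply (proj2_sig l) | exact Hm]|].
  apply htpy_app_r, Hl.
Qed.

Lemma loop_cat_assoc (l m n : loop) :
  loop_htpy (loop_cat l (loop_cat m n)) (loop_cat (loop_cat l m) n).
Proof. unfold loop_htpy; simpl; rewrite app_assoc; apply htpy_refl. Qed.

Lemma loop_nil_l (l : loop) : loop_htpy (loop_cat loop_nil l) l.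
Proof. apply htpy_refl. Qed.

Lemma loop_nil_r (l : loop) : loop_htpy (loop_cat l loop_nil) l.
Proof. unfold loop_htpy; simpl; rewrite app_nil_r; apply htpy_refl. Qed.

Lemma loop_rev_l (l : loop) : loop_htpy (loop_cat (loop_rev l) l) loop_nil.
Proof.
  unfold loop_htpy; simpl.
  pose proof (htpy_cancel x0 [] (revinv (proj1_sig l)) []) as Hc.
  rewrite revinv_involutive, app_nil_r in Hc; exact Hc.
Qed.

Lemma loop_rev_r (l : loop) : loop_htpy (loop_cat l (loop_rev l)) loop_nil.
Proof.
  unfold loop_htpy; simpl.
  pose proof (htpy_cancel x0 [] (proj1_sig l) []) as Hc.
  rewrite app_nil_r in Hc; exact Hc.
Qed.

Definition fundamental_group : Group :=
  quotient_group loop_htpy_equiv loop_cat loop_nil loop_rev loop_cat_compat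
    loop_cat_assoc loop_nil_l loop_nil_r loop_rev_l loop_rev_r.

Lemma fundamental_mul (l m : loop) :
  gmul fundamental_group (class_of loop_htpy l) (class_of loop_htpy m)
  = class_of loop_htpy (loop_cat l m).
Proof. apply quotient_mul. Qed.

Lemma fundamental_inv (l : loop) :
  ginv fundamental_group (class_of loop_htpy l) = class_of loop_htpy (loop_rev l).
Proof. apply quotient_inv. Qed.

End FundamentalGroup.

(** * Part (b): two-vertex presentations with involutory generators only *)

Lemma bool_fpf (f : bool -> bool) : (forall b, f b <> b) -> forall b, f b = negb b.
Proof. intros Hf b; specialize (Hf b); destruct (f b), b; simpl; congruence. Qed.

(** Such a presentation has at least one generator, since [φ] acts
    transitively on the two vertices. *)
Lemma involutory_generator_exists (P : PartitePres bool) :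
  (pU P -> False) -> inhabited (pI P).
Proof.
  intros no_U.
  destruct (phi_transitive P true false) as [[|[u b|i] w] Hw].
  - discriminate Hw.
  - destruct (no_U u).
  - exact (inhabits i).
Qed.

Section TwoVertexPresentation.
Variables (P : PartitePres bool) (x0 : bool) (a0 : pI P).
Hypothesis no_U : pU P -> False.
Notation word := (list (pletter P)).
Notation HT := (@htpy bool P x0).
Notation pi1 := (fundamental_group P x0).
Notation cls := (class_of (@loop_htpy bool P x0)).

Lemma pact_snoc (w : word) (i : pI P) (x : bool) :
  pact (w ++ [LI _ i]) x = negb (pact w x).
Proof. rewrite pact_app; exact (@bool_fpf (phiI P i) (phiI_fpf P i) (pact w x)). Qed.

Definition side (w : word) : bool := xorb x0 (pact w x0).

Lemma side_snoc (w : word) (i : pI P) : side (w ++ [LI _ i]) = negb (side w).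
Proof. unfold side; rewrite pact_snoc, negb_xorb_r; reflexivity. Qed.

Lemma side_loop (l : loop P x0) : side (proj1_sig l) = false.
Proof. unfold side; rewrite (proj2_sig l); apply xorb_nilpotent. Qed.

Definition closing (w : word) : word := if side w then w ++ [LI _ a0] else w.

Lemma closing_closed (w : word) : pact (closing w) x0 = x0.
Proof.
  unfold closing, side; destruct (xorb x0 (pact w x0)) eqn:Hs;
    [rewrite pact_snoc|]; revert Hs; generalize (pact w x0);
    intros y; destruct x0, y; simpl; congruence.
Qed.

Definition close (w : word) : loop P x0 := exist _ (closing w) (closing_closed w).

Lemma closing_htpy (w v : word) : HT w v -> HT (closing w) (closing v).
Proof.
  intros Hwv.
  assert (Hs : side w = side v) by (unfold side; rewrite (htpy_endpoint Hwv); reflexivity).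
  unfold closing; rewrite Hs; destruct (side v); [apply htpy_app_r|]; exact Hwv.
Qed.

Definition label (w : word) : pi1 * bool := (cls (close w), side w).

Lemma label_faithful (w v : word) : HT w v <-> label w = label v.
Proof.
  unfold label; split.
  - intros Hwv; f_equal.
    + apply class_of_eq; [apply loop_htpy_equiv|]; apply closing_htpy, Hwv.
    + unfold side; rewrite (htpy_endpoint Hwv); reflexivity.
  - intros Heq; pose proof (f_equal fst Heq) as Hc; pose proof (f_equal snd Heq) as Hs.
    simpl in Hc, Hs.
    apply (class_of_eq (@loop_htpy_equiv bool P x0)) in Hc.
    unfold loop_htpy, close, closing in Hc; simpl in Hc; rewrite Hs in Hc.
    destruct (side v); [eapply htpy_cancel_last; exact Hc | exact Hc].
Qed.

Lemma label_onto (p : pi1 * bool) : exists w, label w = p.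
Proof.
  destruct p as [g b]; destruct (class_of_surjective g) as [l ->].
  destruct b.
  - exists (proj1_sig l ++ [LI _ a0]); unfold label.
    rewrite side_snoc, side_loop; f_equal.
    apply class_of_eq; [apply loop_htpy_equiv|].
    unfold loop_htpy, close, closing; simpl; rewrite side_snoc, side_loop; simpl.
    rewrite <- app_assoc; apply htpy_sym, (htpy_back_end x0 (proj1_sig l) (LI _ a0)).
  - exists (proj1_sig l); unfold label; rewrite side_loop; f_equal.
    apply class_of_eq; [apply loop_htpy_equiv|].
    unfold loop_htpy, close, closing; simpl; rewrite side_loop; apply htpy_refl.
Qed.

Lemma generator_closed (i : pI P) : pact [LI _ i; LI _ a0] x0 = x0.
Proof.
  change [LI (pU P) i; LI _ a0] with (([] ++ [LI (pU P) i]) ++ [LI (pU P) a0]).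
  rewrite !pact_snoc; apply negb_involutive.
Qed.

Definition generator_loop (i : pI P) : loop P x0 :=
  exist _ [LI _ i; LI _ a0] (generator_closed i).

Definition generators (g : pi1) : Prop := exists i, g = cls (generator_loop i).

Lemma label_snoc (w : word) (i : pI P) :
  label (w ++ [LI _ i]) =
  if side w
  then (gmul pi1 (cls (close w)) (ginv pi1 (cls (generator_loop i))), false)
  else (gmul pi1 (cls (close w)) (cls (generator_loop i)), true).
Proof.
  unfold label; rewrite side_snoc.
  destruct (side w) eqn:Hs;
    [rewrite fundamental_inv|]; rewrite fundamental_mul; f_equal;
    apply class_of_eq; try apply loop_htpy_equiv;
    unfold loop_htpy, close, closing; simpl; rewrite side_snoc, Hs; simpl.
  - rewrite <- app_assoc.
    change (revinv [LI (pU P) i; LI _ a0]) with [LI (pU P) a0; LI _ i].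
    apply htpy_sym, (htpy_back x0 w [LI _ i] (LI _ a0)).
  - rewrite <- app_assoc; apply htpy_refl.
Qed.

Lemma label_adj (w : word) (q : pi1 * bool) :
  @haar_adj pi1 generators (label w) q <-> exists a, q = label (w ++ [a]).
Proof.
  assert (Hletter : forall Q : pletter P -> Prop, (exists a, Q a) <-> exists i, Q (LI _ i)).
  { intros Q; split; [intros [[u b|i] Ha]; [destruct (no_U u)|]|intros [i Hi]]; eauto. }
  rewrite Hletter; unfold label at 1.
  destruct (side w) eqn:Hs; [rewrite haar_adj_side1 | rewrite haar_adj_side0]; split.
  - intros [s [[i ->] ->]]; exists i; rewrite label_snoc, Hs; reflexivity.
  - intros [i ->]; rewrite label_snoc, Hs; eexists; split; [exists i|]; reflexivity.
  - intros [s [[i ->] ->]]; exists i; rewrite label_snoc, Hs; reflexivity.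
  - intros [i ->]; rewrite label_snoc, Hs; eexists; split; [exists i|]; reflexivity.
Qed.

Theorem two_vertex_pcay_haar : graph_iso (@pcay_adj bool P x0) (@haar_adj pi1 generators).
Proof.
  apply (@pcay_iso_criterion bool P x0 _ _ label).
  - apply label_faithful.
  - apply label_onto.
  - apply label_adj.
Qed.

End TwoVertexPresentation.

Theorem corollary4 :
  (forall (G : Group) (S : G -> Prop),
      @haar_connected G S ->
      exists P : PartitePres bool,
        forall x0 : bool,
          graph_iso (@pcay_adj bool P x0) (@haar_adj G S))
  /\
  (forall P : PartitePres bool,
      (pU P -> False) ->
      forall x0 : bool,
        exists (G : Group) (T : G -> Prop),
          graph_iso (@pcay_adj bool P x0) (@haar_adj G T)).
Proof.
  split.
  - intros G S S_connected.
    destruct (haar_connected_generator S_connected) as [s0 S_s0].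
    exists (@haar_presentation G S s0 S_s0); intros x0.
    apply haar_pcay_iso, S_connected.
  - intros P no_U x0.
    destruct (involutory_generator_exists P no_U) as [a0].
    exists (fundamental_group P x0), (generators a0).
    apply two_vertex_pcay_haar, no_U.
Qed.
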